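(* Let $R$ be a commutative unital ring, and in the category $\mathfrak{FdgMod}_R$ of filtered cochain complexes of $R$-modules let $I=\{S_R(n+1,p)\to D_R(n,p)\}_{n\in\mathbb Z,p\in\mathbb N}$, $J=\{0\to D_R(n,p)\}_{n\in\mathbb Z,p\in\mathbb N}$ and $W=\{f:(M,F)\to(N,F) : H^n(F^pf)\text{ iso for all }n,p\}$. Then $J\text{-cof}\subseteq W\cap I\text{-cof}$.
   Context: Filtered cochain complexes $(M,F)$: complexes of $R$-modules with decreasing filtrations by subcomplexes $F^kM$, $k\in\mathbb N$, $F^0M=M$; morphisms preserve filtrations. $D_R(n)$: $R$ in degrees $n,n+1$ with identity differential; $S_R(n)$: $R$ in degree $n$; $D_R(n,p)$, $S_R(n,p)$: filtered with $F^k$ the whole complex for $k\le p$ and $0$ for $k>p$. For a class of maps $K$: $K$-inj is the class of maps with the right lifting property with respect to all maps in $K$; $K$-cof is the class of maps with the left lifting property with respect to all maps in $K$-inj. *)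

From HB Require Import structures.
From mathcomp Require Import all_boot all_order all_algebra.
Unset Printing Implicit Defensive.
Import Order.TTheory GRing.Theory Num.Theory.
Local Open Scope ring_scope.

Record fcomplex (R : comPzRingType) := FComplex {
  cx : int -> lmodType R;
  dif : forall n : int, cx n -> cx (n + 1);
  dif_lin : forall n a (x y : cx n), dif n (a *: x + y) = a *: dif n x + dif n y;
  dif2 : forall n (x : cx n), dif (n + 1) (dif n x) = 0;
  fil : nat -> forall n : int, pred (cx n);
  fil_0 : forall n (x : cx n), fil 0 n x;
  fil_decr : forall p n (x : cx n), fil p.+1 n x -> fil p n x;
  fil_zero : forall p n, fil p n 0;
  fil_add : forall p n (x y : cx n), fil p n x -> fil p n y -> fil p n (x + y);
  fil_scale : forall p n a (x : cx n), fil p n x -> fil p n (a *: x);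
  fil_dif : forall p n (x : cx n), fil p n x -> fil p (n + 1) (dif n x)
}.

Arguments cx {R}.
Arguments dif {R}.
Arguments fil {R}.

Record fhom (R : comPzRingType) (M N : fcomplex R) := FHom {
  hom : forall n : int, cx M n -> cx N n;
  hom_lin : forall n a (x y : cx M n), hom n (a *: x + y) = a *: hom n x + hom n y;
  hom_dif : forall n (x : cx M n), hom (n + 1) (dif M n x) = dif N n (hom n x);
  hom_fil : forall p n (x : cx M n), fil M p n x -> fil N p n (hom n x)
}.

Arguments fhom {R}.
Arguments hom {R M N}.
Set Implicit Arguments. Unset Strict Implicit.

(** H^(n+1)(F^p f) is an isomorphism (every degree is of the form n+1, n : int).
    Cycles Z = {z in F^p M^(n+1) | d z = 0}, boundaries B = d(F^p M^n);
    the induced map Z/B -> Z'/B', [z] |-> [f z], is injective and surjective. *)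
Definition Hiso (R : comPzRingType) (M N : fcomplex R) (f : fhom M N)
    (p : nat) (n : int) : Prop :=
  (forall z : cx M (n + 1), fil M p (n + 1) z -> dif M (n + 1) z = 0 ->
     (exists2 w' : cx N n, fil N p n w' & hom f (n + 1) z = dif N n w') ->
     exists2 w : cx M n, fil M p n w & z = dif M n w)
  /\
  (forall z' : cx N (n + 1), fil N p (n + 1) z' -> dif N (n + 1) z' = 0 ->
     exists z : cx M (n + 1), [/\ fil M p (n + 1) z, dif M (n + 1) z = 0 &
       exists2 w' : cx N n, fil N p n w' & hom f (n + 1) z = z' + dif N n w']).

Arguments Hiso {R M N}.

Definition W (R : comPzRingType) (M N : fcomplex R) (f : fhom M N) : Prop :=
  forall (n : int) (p : nat), Hiso f p n.

Definition lifts (R : comPzRingType) (A B X Y : fcomplex R)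
    (i : fhom A B) (q : fhom X Y) : Prop :=
  forall (u : fhom A X) (v : fhom B Y),
    (forall n x, hom q n (hom u n x) = hom v n (hom i n x)) ->
    exists h : fhom B X,
      (forall n x, hom h n (hom i n x) = hom u n x) /\
      (forall n x, hom q n (hom h n x) = hom v n x).

Definition mapfam (R : comPzRingType) :=
  int -> nat -> {A : fcomplex R & {B : fcomplex R & fhom A B}}.

Definition fam_map (R : comPzRingType) (K : mapfam R) n p :=
  projT2 (projT2 (K n p)).

Definition Kinj (R : comPzRingType) (K : mapfam R) (X Y : fcomplex R)
    (q : fhom X Y) : Prop :=
  forall n p, lifts (fam_map K n p) q.

Definition Kcof (R : comPzRingType) (K : mapfam R) (A B : fcomplex R)
    (i : fhom A B) : Prop :=
  forall (X Y : fcomplex R) (q : fhom X Y), Kinj K q -> lifts i q.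

Section MxComplex.
Variable R : comPzRingType.
Variable dim : int -> nat.
Variable A : forall k : int, 'M[R]_(dim (k + 1), dim k).
Hypothesis HA : forall k, A (k + 1) *m A k = 0.
Variable p : nat.

Definition mxfil (q : nat) (k : int) : pred 'cV[R]_(dim k) :=
  fun x => (q <= p)%N || (x == 0).

Definition mxcomplex : fcomplex R.
Proof.
refine (@FComplex R (fun k => 'cV[R]_(dim k)) (fun k x => A k *m x) _ _ mxfil
          _ _ _ _ _ _).
- by move=> n a x y; rewrite mulmxDr scalemxAr.
- by move=> n x; rewrite mulmxA HA mul0mx.
- by move=> n x; rewrite /mxfil leq0n.
- by move=> q n x; rewrite /mxfil => /orP [H|->]; rewrite ?orbT // ltnW.
- by move=> q n; rewrite /mxfil eqxx orbT.
- move=> q n x y; rewrite /mxfil.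
  by case: (q <= p)%N => //= /eqP -> /eqP ->; rewrite addr0.
- move=> q n a x; rewrite /mxfil.
  by case: (q <= p)%N => //= /eqP ->; rewrite scaler0.
- move=> q n x; rewrite /mxfil.
  by case: (q <= p)%N => //= /eqP ->; rewrite mulmx0.
Defined.
End MxComplex.

Section MxHom.
Variable R : comPzRingType.
Variables (dim1 dim2 : int -> nat).
Variable A1 : forall k : int, 'M[R]_(dim1 (k + 1), dim1 k).
Variable A2 : forall k : int, 'M[R]_(dim2 (k + 1), dim2 k).
Hypothesis HA1 : forall k, A1 (k + 1) *m A1 k = 0.
Hypothesis HA2 : forall k, A2 (k + 1) *m A2 k = 0.
Variables (p1 p2 : nat).
Hypothesis Hp : (p1 <= p2)%N.
Variable B : forall k : int, 'M[R]_(dim2 k, dim1 k).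
Hypothesis HB : forall k, B (k + 1) *m A1 k = A2 k *m B k.

Definition mxhom : fhom (mxcomplex HA1 p1) (mxcomplex HA2 p2).
Proof.
refine (@FHom R (mxcomplex HA1 p1) (mxcomplex HA2 p2)
          (fun k (x : 'cV[R]_(dim1 k)) => B k *m x) _ _ _).
- by move=> n a x y; rewrite /= mulmxDr scalemxAr.
- by move=> n x; rewrite /= mulmxA HB mulmxA.
- move=> q n x; rewrite /= /mxfil => /orP [H|/eqP ->].
    by rewrite (leq_trans H Hp).
  by rewrite mulmx0 eqxx orbT.
Defined.
End MxHom.

Section Concrete.
Variable R : comPzRingType.

(* D_R(n, p): R in degrees n and n+1, identity differential. *)
Definition dimD (n k : int) : nat := ((k == n) || (k == n + 1))%B.
Definition AD (n k : int) : 'M[R]_(dimD n (k + 1), dimD n k) :=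
  \matrix_(i, j) (if k == n then 1 else 0).

Lemma AD2 n k : AD n (k + 1) *m AD n k = 0.
Proof.
apply/matrixP => i j; rewrite !mxE big1 // => l _; rewrite !mxE.
have [->|] := eqVneq k n.
  have -> : (n + 1 == n) = false.
    by apply/negbTE; rewrite -subr_eq0 addrAC subrr add0r oner_eq0.
  by rewrite mul0r.
by rewrite mulr0.
Qed.

Definition D_R (n : int) (p : nat) : fcomplex R := mxcomplex (@AD2 n) p.

(* S_R(n, p): R in degree n, zero differential. *)
Definition dimS (n k : int) : nat := (k == n).
Definition AS (n k : int) : 'M[R]_(dimS n (k + 1), dimS n k) := 0.
Lemma AS2 n k : AS n (k + 1) *m AS n k = 0.
Proof. by rewrite mulmx0. Qed.

Definition S_R (n : int) (p : nat) : fcomplex R := mxcomplex (@AS2 n) p.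

Definition A0 (k : int) : 'M[R]_(0, 0) := 0.
Lemma A02 k : A0 (k + 1) *m A0 k = 0.
Proof. by rewrite mulmx0. Qed.
Definition zero_cx : fcomplex R := mxcomplex (dim := fun _ => 0%N) A02 0.

(* The canonical inclusion S_R(n+1, p) -> D_R(n, p) (identity in degree n+1). *)
Definition Bincl (n k : int) : 'M[R]_(dimD n k, dimS (n + 1) k) :=
  \matrix_(i, j) 1.

Lemma Bincl_comm n k :
  Bincl n (k + 1) *m AS (n + 1) k = AD n k *m Bincl n k.
Proof.
rewrite mulmx0; apply/matrixP => i j; rewrite !mxE.
have Hk : k == n + 1.
  have H := leq_ltn_trans (leq0n j) (ltn_ord j).
  by move: H; rewrite /dimS lt0b.
have Hkn : (k == n) = false.
  rewrite (eqP Hk).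
  by apply/negbTE; rewrite -subr_eq0 addrAC subrr add0r oner_eq0.
by rewrite big1 // => l _; rewrite !mxE Hkn mul0r.
Qed.

Definition incl_SD (n : int) (p : nat) : fhom (S_R (n + 1) p) (D_R n p) :=
  mxhom (@AS2 (n + 1)) (@AD2 n) (leqnn p) (@Bincl_comm n).

Definition Bzero (n k : int) : 'M[R]_(dimD n k, 0) := 0.
Lemma Bzero_comm n k : Bzero n (k + 1) *m A0 k = AD n k *m Bzero n k.
Proof. by rewrite !mulmx0. Qed.

Definition zero_D (n : int) (p : nat) : fhom zero_cx (D_R n p) :=
  mxhom A02 (@AD2 n) (leq0n p) (@Bzero_comm n).

Definition Ifam : mapfam R := fun n p =>
  existT _ (S_R (n + 1) p) (existT _ (D_R n p) (incl_SD n p)).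
Definition Jfam : mapfam R := fun n p =>
  existT _ zero_cx (existT _ (D_R n p) (zero_D n p)).
End Concrete.

From HB Require Import structures.
From mathcomp Require Import all_boot all_order all_algebra.
Import GRing.Theory.
Unset Printing Implicit Defensive.
Local Open Scope ring_scope.

(* A map out of D(n,p) is the same as an element of F^p in degree n, and a
   map out of S(n,p) the same as a cycle of F^p in degree n.  Hence every map
   that is surjective on each F^p has the RLP against 0 -> D(n,p); conversely,
   lifting against S(n+2,p) -> D(n+1,p) and then S(n+1,p) -> D(n,p) shows that
   an I-injective map is surjective on each F^p.  So I-inj is contained in
   J-inj, i.e. J-cof in I-cof.
   For W, factor f as A -> A (+) E -> B, where E^n = B^n (+) B^(n-1) with
   d(b, c) = (0, b) is a sum of disks on B and the second map
   (a, b, c) |-> f a + b + d c is surjective on each F^p.  A lift in the square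
   against it gives h : B -> A (+) E with h f = incl and a section of the
   projection; applying h to cycles and boundaries shows that every H(F^p f)
   is bijective. *)

Arguments dif_lin {R} f n.
Arguments dif2 {R f n}.
Arguments fil_0 {R f n}.
Arguments fil_decr {R f p n x}.
Arguments fil_zero {R f p n}.
Arguments fil_add {R f p n x y}.
Arguments fil_scale {R f p n} a {x}.
Arguments fil_dif {R f p n x}.
Arguments hom_lin {R M N} f n.
Arguments hom_dif {R M N f n}.
Arguments hom_fil {R M N f p n x}.

Section LinearFun.
Variables (R : pzRingType) (U V : lmodType R) (f : U -> V).
Hypothesis f_lin : linear f.

Let fL : {linear U -> V} := HB.pack f (GRing.isLinear.Build R U V *:%R f f_lin).

Lemma linfun0 : f 0 = 0. Proof. exact: (linear0 fL). Qed.
Lemma linfunD x y : f (x + y) = f x + f y. Proof. exact: (linearD fL). Qed.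
Lemma linfunN x : f (- x) = - f x. Proof. exact: (linearN fL). Qed.
Lemma linfunZ a x : f (a *: x) = a *: f x. Proof. exact: (linearZ_LR fL). Qed.
Lemma linfun_sum (I : Type) (r : seq I) (F : I -> U) :
  f (\sum_(i <- r) F i) = \sum_(i <- r) f (F i).
Proof. exact: (linear_sum fL). Qed.
End LinearFun.
Arguments linfun0 {R U V f}.
Arguments linfunD {R U V f} f_lin x y.
Arguments linfunN {R U V f} f_lin x.
Arguments linfunZ {R U V f} f_lin a x.
Arguments linfun_sum {R U V f} f_lin {I} r F.

Lemma addr1_eqF {V : nzRingType} (x : V) : (x + 1 == x) = false.
Proof. by rewrite -subr_eq0 addrAC subrr add0r oner_eq0. Qed.

Lemma sumr_const_dim1 {V : nmodType} {d} (x : V) : d = 1%N -> \sum_(i < d) x = x.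
Proof. by move->; rewrite big_ord1. Qed.

Lemma delta_mx_dim1 (R : pzSemiRingType) d (j : 'I_d) : (d <= 1)%N ->
  delta_mx j ord0 = const_mx 1 :> 'cV[R]_d.
Proof.
case: d j => [[]//|[|//] j _]; apply/matrixP => i c.
by rewrite !mxE !ord1 !eqxx.
Qed.

Lemma pair_linE (R : pzRingType) (U V : lmodType R) a (u u' : U) (v v' : V) :
  a *: ((u, v) : U * V) + (u', v') = (a *: u + u', a *: v + v').
Proof. by []. Qed.

Section Generalities.
Variable R : comPzRingType.
Implicit Types (M N P X Y : fcomplex R) (n k : int) (p q : nat).

Lemma fil_le M p q n (x : cx M n) : (q <= p)%N -> fil M p n x -> fil M q n x.
Proof.
move=> le_qp; rewrite -(subnKC le_qp).
by elim: (p - q)%N => [|i IH]; rewrite ?addn0 // addnS => /fil_decr.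
Qed.

Lemma fil_sum M p n (I : finType) (c : I -> R) (g : I -> cx M n) :
  (forall i, fil M p n (g i)) -> fil M p n (\sum_i c i *: g i).
Proof.
move=> g_fil; apply: (big_ind (fil M p n)) => [|x y|i _]; first exact: fil_zero.
  exact: fil_add.
exact: fil_scale.
Qed.

Definition fid M : fhom M M :=
  @FHom R M M (fun n x => x) (fun _ _ _ _ => erefl) (fun _ _ => erefl)
    (fun _ _ _ x_fil => x_fil).

Definition fcomp M N P (g : fhom N P) (f : fhom M N) : fhom M P.
Proof.
refine (@FHom R M P (fun n x => hom g n (hom f n x)) _ _ _).
- by move=> n a x y; rewrite !hom_lin.
- by move=> n x; rewrite !hom_dif.
- by move=> p n x /hom_fil/hom_fil.
Defined.
Arguments fcomp {M N P}.

Lemma fcompE M N P (g : fhom N P) (f : fhom M N) n x :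
  hom (fcomp g f) n x = hom g n (hom f n x).
Proof. by []. Qed.

(* Transport of vectors along an equality of degrees, needed because
   [n + 1 - 1] and [n] are not convertible. *)
Definition tr M m k (e : m = k) (x : cx M m) : cx M k :=
  eq_rect m (fun i => (cx M i : Type)) x k e.
Arguments tr {M m k}.

Lemma tr_id M m (e : m = m) (x : cx M m) : tr e x = x.
Proof. by rewrite (eq_irrelevance e erefl). Qed.

Lemma tr_tr M m k l (e1 : m = k) (e2 : k = l) (x : cx M m) :
  tr e2 (tr e1 x) = tr (etrans e1 e2) x.
Proof. by case: l / e2; case: k / e1. Qed.

Lemma tr_lin M m k (e : m = k) : linear (@tr M m k e).
Proof. by case: k / e. Qed.

Lemma tr_eq0 M m k (e : m = k) (x : cx M m) : tr e x = 0 -> x = 0.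
Proof. by case: k / e. Qed.

Lemma tr_dif M m k (e : m = k) (x : cx M m) :
  dif M k (tr e x) = tr (congr1 (+%R^~ 1) e) (dif M m x).
Proof. by case: k / e. Qed.

Lemma tr_fil M p m k (e : m = k) (x : cx M m) :
  fil M p m x -> fil M p k (tr e x).
Proof. by case: k / e. Qed.

Section MatrixComplexMaps.
Variables (dim : int -> nat) (A : forall k, 'M[R]_(dim (k + 1), dim k)).
Hypothesis HA : forall k, A (k + 1) *m A k = 0.
Variables (p : nat) (X : fcomplex R).

Lemma mxcomplex_hom_ext (g1 g2 : fhom (mxcomplex HA p) X) :
  (forall k (j : 'I_(dim k)),
     hom g1 k (delta_mx j ord0) = hom g2 k (delta_mx j ord0)) ->
  forall k v, hom g1 k v = hom g2 k v.
Proof.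
move=> eq_g k v; rewrite (matrix_sum_delta v) !(linfun_sum (hom_lin _ k)).
by apply: eq_bigr => j _; rewrite !big_ord1 !(linfunZ (hom_lin _ k)) eq_g.
Qed.

Variable g : forall k, 'I_(dim k) -> cx X k.
Hypothesis g_fil : forall k j, fil X p k (g k j).
Hypothesis g_dif : forall k j, dif X k (g k j) = \sum_i A k i j *: g (k + 1) i.

Definition mxmap : fhom (mxcomplex HA p) X.
Proof.
refine (@FHom R (mxcomplex HA p) X (fun k v => \sum_j v j 0 *: g k j) _ _ _).
- move=> n a x y /=; rewrite scaler_sumr -big_split /=; apply: eq_bigr => j _.
  by rewrite !mxE scalerDl scalerA.
- move=> n x /=; rewrite (linfun_sum (dif_lin X n)).
  under [RHS]eq_bigr => j _ do rewrite (linfunZ (dif_lin X n)) g_dif scaler_sumr.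
  rewrite exchange_big /=; apply: eq_bigr => i _.
  rewrite mxE scaler_suml; apply: eq_bigr => j _.
  by rewrite scalerA mulrC.
- move=> q n x /=; rewrite /mxfil => /orP [le_qp|/eqP ->].
    by apply: fil_sum => j; apply: fil_le le_qp (g_fil _ _).
  rewrite big1; first exact: fil_zero.
  by move=> j _; rewrite mxE scale0r.
Defined.
End MatrixComplexMaps.
End Generalities.
Arguments fid {R}.
Arguments fcomp {R M N P}.
Arguments tr {R M m k}.
Arguments tr_lin {R M m k} e.

Arguments mxmap {R dim A} HA {p X} g g_fil g_dif.

Section DisksAndSpheres.
Variable R : comPzRingType.
Implicit Types (X : fcomplex R) (n m k : int) (p : nat).

Lemma dimD_n n : dimD n n = 1%N.
Proof. by rewrite /dimD eqxx. Qed.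

Lemma dimD_n1 n : dimD n (n + 1) = 1%N.
Proof. by rewrite /dimD eqxx orbT. Qed.

Lemma dimD_out {n k} : k != n -> k != n + 1 -> 'I_(dimD n k) -> False.
Proof. by rewrite /dimD => /negbTE-> /negbTE-> []. Qed.

Lemma dimS_out {m k} : k != m -> 'I_(dimS m k) -> False.
Proof. by rewrite /dimS => /negbTE-> []. Qed.

Definition disk_gen {n p} : cx (D_R R n p) n := const_mx 1.
Definition sphere_gen {m p} : cx (S_R R m p) m := const_mx 1.

Lemma disk_gen_fil n p : fil (D_R R n p) p n disk_gen.
Proof. by rewrite /= /mxfil leqnn. Qed.

Lemma dif_disk_gen n p : dif (D_R R n p) n disk_gen = const_mx 1.
Proof.
apply/matrixP => i c; rewrite !mxE.
under eq_bigr => j _ do rewrite /AD !mxE eqxx mul1r.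
by rewrite sumr_const_dim1 ?dimD_n.
Qed.

Lemma incl_SD_sphere_gen n p :
  hom (incl_SD R n p) (n + 1) sphere_gen = dif (D_R R n p) n disk_gen.
Proof.
rewrite dif_disk_gen; apply/matrixP => i c; rewrite !mxE.
under eq_bigr => j _ do rewrite /Bincl !mxE mul1r.
by rewrite sumr_const_dim1 // /dimS eqxx.
Qed.

Lemma D_R_hom_ext n p X (g1 g2 : fhom (D_R R n p) X) :
  hom g1 n disk_gen = hom g2 n disk_gen -> forall k v, hom g1 k v = hom g2 k v.
Proof.
move=> eq_g; apply: mxcomplex_hom_ext => k j; rewrite delta_mx_dim1 ?leq_b1 //.
have [-> //|kn] := eqVneq k n; have [->|kn1] := eqVneq k (n + 1).
  by rewrite -(dif_disk_gen n p) !hom_dif eq_g.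
by case: (dimD_out kn kn1 j).
Qed.

Lemma S_R_hom_ext m p X (g1 g2 : fhom (S_R R m p) X) :
  hom g1 m sphere_gen = hom g2 m sphere_gen -> forall k v, hom g1 k v = hom g2 k v.
Proof.
move=> eq_g; apply: mxcomplex_hom_ext => k j; rewrite delta_mx_dim1 ?leq_b1 //.
have [-> //|km] := eqVneq k m.
by case: (dimS_out km j).
Qed.

Section DiskMap.
Variables (X : fcomplex R) (n : int) (p : nat) (x : cx X n).
Hypothesis x_fil : fil X p n x.

Definition disk_vec k : cx X k :=
  match k =P n with
  | ReflectT e => tr (esym e) x
  | ReflectF _ =>
    match k =P n + 1 with
    | ReflectT e => tr (esym e) (dif X n x)
    | ReflectF _ => 0
    end
  end.

Lemma disk_vec_n : disk_vec n = x.
Proof. by rewrite /disk_vec; case: eqP => // e; rewrite tr_id. Qed.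

Lemma disk_vec_n1 : disk_vec (n + 1) = dif X n x.
Proof.
rewrite /disk_vec; case: eqP => [e|_].
  by have := addr1_eqF n; rewrite {1}e eqxx.
by case: eqP => // e; rewrite tr_id.
Qed.

Lemma disk_vec_out k : k != n -> k != n + 1 -> disk_vec k = 0.
Proof. by rewrite /disk_vec; do 2 case: eqP => //. Qed.

Lemma disk_vec_fil k : fil X p k (disk_vec k).
Proof.
have [->|kn] := eqVneq k n; first by rewrite disk_vec_n.
have [->|kn1] := eqVneq k (n + 1); first by rewrite disk_vec_n1 fil_dif.
by rewrite disk_vec_out ?fil_zero.
Qed.

Lemma disk_vec_dif k (j : 'I_(dimD n k)) :
  dif X k (disk_vec k) = \sum_i AD R n k i j *: disk_vec (k + 1).
Proof.
have [ekn|kn] := eqVneq k n.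
  subst k; under eq_bigr => i _ do rewrite /AD mxE eqxx scale1r.
  by rewrite sumr_const_dim1 ?dimD_n1 // disk_vec_n disk_vec_n1.
have [ekn1|kn1] := eqVneq k (n + 1); last by case: (dimD_out kn kn1 j).
subst k; rewrite disk_vec_n1 dif2 big1 // => i _.
by rewrite /AD mxE addr1_eqF scale0r.
Qed.

Definition disk_map : fhom (D_R R n p) X :=
  mxmap (@AD2 R n) (fun k _ => disk_vec k) (fun k _ => disk_vec_fil k)
    disk_vec_dif.

Lemma disk_map_gen : hom disk_map n disk_gen = x.
Proof.
rewrite /= (eq_bigr (fun=> disk_vec n)) => [|j _]; last by rewrite mxE scale1r.
by rewrite sumr_const_dim1 ?dimD_n // disk_vec_n.
Qed.
End DiskMap.

Section SphereMap.
Variables (X : fcomplex R) (m : int) (p : nat) (z : cx X m).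
Hypotheses (z_fil : fil X p m z) (z_cyc : dif X m z = 0).

Definition sphere_vec k : cx X k :=
  match k =P m with
  | ReflectT e => tr (esym e) z
  | ReflectF _ => 0
  end.

Lemma sphere_vec_m : sphere_vec m = z.
Proof. by rewrite /sphere_vec; case: eqP => // e; rewrite tr_id. Qed.

Lemma sphere_vec_out k : k != m -> sphere_vec k = 0.
Proof. by rewrite /sphere_vec; case: eqP. Qed.

Lemma sphere_vec_fil k : fil X p k (sphere_vec k).
Proof.
have [->|km] := eqVneq k m; first by rewrite sphere_vec_m.
by rewrite sphere_vec_out ?fil_zero.
Qed.

Lemma sphere_vec_dif k (j : 'I_(dimS m k)) :
  dif X k (sphere_vec k) = \sum_i AS R m k i j *: sphere_vec (k + 1).
Proof.
rewrite big1 => [|i _]; last by rewrite mxE scale0r.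
have [ekm|km] := eqVneq k m; first by subst k; rewrite sphere_vec_m.
by rewrite sphere_vec_out // (linfun0 (dif_lin X k)).
Qed.

Definition sphere_map : fhom (S_R R m p) X :=
  mxmap (@AS2 R m) (fun k _ => sphere_vec k) (fun k _ => sphere_vec_fil k)
    sphere_vec_dif.

Lemma sphere_map_gen : hom sphere_map m sphere_gen = z.
Proof.
rewrite /= (eq_bigr (fun=> sphere_vec m)) => [|j _]; last by rewrite mxE scale1r.
by rewrite sumr_const_dim1 ?sphere_vec_m // /dimS eqxx.
Qed.
End SphereMap.
End DisksAndSpheres.

Arguments disk_gen {R n p}.
Arguments sphere_gen {R m p}.
Arguments disk_gen_fil {R} n p.
Arguments D_R_hom_ext {R n p X}.
Arguments S_R_hom_ext {R m p X}.
Arguments disk_map {R X n p x}.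
Arguments sphere_map {R X m p z}.

Section LiftingClasses.
Variable R : comPzRingType.
Implicit Types (A B X Y : fcomplex R).

Definition fil_surjective {X Y} (q : fhom X Y) : Prop :=
  forall p n y, fil Y p n y -> exists2 x, fil X p n x & hom q n x = y.

Lemma fil_surjective_Jinj X Y (q : fhom X Y) : fil_surjective q -> Kinj (Jfam R) q.
Proof.
move=> q_surj n p u v _.
have [x x_fil qx] := q_surj p n _ (hom_fil (f := v) (disk_gen_fil n p)).
exists (disk_map x_fil); split=> [k w|].
  by rewrite [w]flatmx0 !(linfun0 (hom_lin _ k)).
by apply: (D_R_hom_ext (fcomp q (disk_map x_fil))); rewrite fcompE disk_map_gen.
Qed.

Lemma Iinj_lift_cycle {X Y} {q : fhom X Y} {p n}
    {z : cx X (n + 1)} {y : cx Y n} : Kinj (Ifam R) q ->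
  fil X p (n + 1) z -> dif X (n + 1) z = 0 -> fil Y p n y ->
  hom q (n + 1) z = dif Y n y ->
  exists2 x, fil X p n x & dif X n x = z /\ hom q n x = y.
Proof.
move=> q_inj z_fil z_cyc y_fil qz.
have [|h [hi hq]] := q_inj n p (sphere_map z_fil z_cyc) (disk_map y_fil).
  apply: (S_R_hom_ext (fcomp q (sphere_map z_fil z_cyc))
                      (fcomp (disk_map y_fil) (incl_SD R n p))).
  by rewrite !fcompE sphere_map_gen incl_SD_sphere_gen hom_dif disk_map_gen.
exists (hom h n disk_gen); first exact: hom_fil (disk_gen_fil n p).
by rewrite -hom_dif -incl_SD_sphere_gen hi sphere_map_gen hq disk_map_gen.
Qed.

Lemma Iinj_fil_surjective X Y (q : fhom X Y) : Kinj (Ifam R) q -> fil_surjective q.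
Proof.
move=> q_inj p n y y_fil.
have [|x1 x1_fil [dx1 qx1]] := Iinj_lift_cycle q_inj fil_zero
    (linfun0 (dif_lin X _)) (fil_dif y_fil).
  by rewrite (linfun0 (hom_lin q _)) dif2.
have [x x_fil [_ qx]] := Iinj_lift_cycle q_inj x1_fil dx1 y_fil qx1.
by exists x.
Qed.

Lemma Jcof_Icof A B (f : fhom A B) : Kcof (Jfam R) f -> Kcof (Ifam R) f.
Proof. by move=> f_cof X Y q /Iinj_fil_surjective/fil_surjective_Jinj; apply: f_cof. Qed.
End LiftingClasses.
Arguments fil_surjective {R X Y}.
Arguments fil_surjective_Jinj {R X Y q}.

Section Factorization.
Variables (R : comPzRingType) (A B : fcomplex R) (f : fhom A B).

Definition factor_space n : lmodType R := (cx A n * (cx B n * cx B (n - 1)))%type.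

Definition factor_dif n (t : factor_space n) : factor_space (n + 1) :=
  (dif A n t.1, (0, tr (esym (addrK 1 n)) t.2.1)).

Definition factor_fil p n : pred (factor_space n) :=
  fun t => [&& fil A p n t.1, fil B p n t.2.1 & fil B p (n - 1) t.2.2].

Definition factor_cx : fcomplex R.
Proof.
refine (@FComplex R factor_space factor_dif _ _ factor_fil _ _ _ _ _ _).
- move=> n a x y; rewrite /factor_dif /= (dif_lin A) (tr_lin _).
  by rewrite !pair_linE scaler0 addr0.
- by move=> n x; rewrite /factor_dif /= dif2 (linfun0 (tr_lin _)).
- by move=> n x; rewrite /factor_fil !fil_0.
- by move=> p n x /and3P [? ? ?]; apply/and3P; split; apply: fil_decr.
- by move=> p n; rewrite /factor_fil !fil_zero.
- move=> p n x y /and3P [? ? ?] /and3P [? ? ?].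
  by apply/and3P; split; apply: fil_add.
- by move=> p n a x /and3P [? ? ?]; apply/and3P; split; apply: fil_scale.
- move=> p n x /and3P [x1_fil x2_fil _]; apply/and3P.
  by split; [exact: fil_dif x1_fil | exact: fil_zero | exact: tr_fil x2_fil].
Defined.

Definition factor_incl : fhom A factor_cx.
Proof.
refine (@FHom R A factor_cx (fun n a => (a, (0, 0))) _ _ _).
- by move=> n a x y; rewrite !pair_linE !scaler0 !addr0.
- by move=> n x; rewrite /= /factor_dif /= (linfun0 (tr_lin _)).
- by move=> p n x x_fil; rewrite /= /factor_fil /= x_fil !fil_zero.
Defined.

Definition factor_proj : fhom factor_cx B.
Proof.
refine (@FHom R factor_cx B (fun n t =>
  hom f n t.1 + t.2.1 + tr (subrK 1 n) (dif B (n - 1) t.2.2)) _ _ _).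
- move=> n a x y /=; rewrite (hom_lin f) (dif_lin B) (tr_lin _) !scalerDr.
  by rewrite [X in X + _ = _]addrACA [LHS]addrACA.
- move=> n x /=; rewrite hom_dif addr0 tr_dif tr_tr tr_id.
  by rewrite !(linfunD (dif_lin B n)) tr_dif dif2 (linfun0 (tr_lin _)) addr0.
- move=> p n x /and3P [x1_fil x2_fil x3_fil].
  by rewrite !fil_add ?hom_fil ?tr_fil ?fil_dif.
Defined.

Lemma factor_projS n (t : cx factor_cx (n + 1)) :
  hom factor_proj (n + 1) t =
  hom f (n + 1) t.1 + t.2.1 + dif B n (tr (addrK 1 n) t.2.2).
Proof. by rewrite /= tr_dif; congr (_ + tr _ _); apply: eq_irrelevance. Qed.

Lemma factor_proj_fil_surjective : fil_surjective factor_proj.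
Proof.
move=> p n y y_fil; exists ((0, (y, 0)) : factor_space n).
  by rewrite /= /factor_fil /= y_fil !fil_zero.
rewrite /= (linfun0 (hom_lin f n)) (linfun0 (dif_lin B _)).
by rewrite (linfun0 (tr_lin _)) add0r addr0.
Qed.

Lemma factor_proj_incl n a : hom factor_proj n (hom factor_incl n a) = hom f n a.
Proof. by rewrite /= (linfun0 (dif_lin B _)) (linfun0 (tr_lin _)) !addr0. Qed.

Lemma factor_section_W (h : fhom B factor_cx) :
  (forall n a, hom h n (hom f n a) = hom factor_incl n a) ->
  (forall n b, hom factor_proj n (hom h n b) = b) -> W f.
Proof.
move=> hf hq n p; split.
  move=> z z_fil z_cyc [w w_fil fz].
  exists (hom h n w).1; first by case/and3P: (hom_fil (f := h) w_fil).
  by have := hf (n + 1) z; rewrite fz hom_dif => /(congr1 fst).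
move=> z' z'_fil z'_cyc; case ht: (hom h (n + 1) z') => [a [b c]].
have := hom_fil (f := h) z'_fil; rewrite ht => /and3P [a_fil _ c_fil].
have := @hom_dif _ _ _ h _ z'; rewrite z'_cyc (linfun0 (hom_lin h _)) ht.
case=> /esym a_cyc /esym/tr_eq0 b0.
exists a; split=> //.
exists (- tr (addrK 1 n) c); first by rewrite -scaleN1r fil_scale ?tr_fil.
have := hq (n + 1) z'; rewrite ht factor_projS b0 addr0 /= => <-.
by rewrite (linfunN (dif_lin B n)) [RHS]addrK.
Qed.
End Factorization.
Arguments factor_incl {R A B}.
Arguments factor_proj_fil_surjective {R A B} f.
Arguments factor_proj_incl {R A B} f.
Arguments factor_section_W {R A B f h}.

Theorem proposition1p23 (R : comPzRingType) (A B : fcomplex R) (f : fhom A B) :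
  Kcof (Jfam R) f -> W f /\ Kcof (Ifam R) f.
Proof.
move=> f_cof; split; last exact: Jcof_Icof.
have [h [hf hq]] := f_cof _ _ _ (fil_surjective_Jinj (factor_proj_fil_surjective f))
  factor_incl (fid B) (factor_proj_incl f).
exact: factor_section_W hf hq.
Qed.
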